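(* Let $\Theta\subset\mathbb{R}^p$, let $\mathcal{K}\subset\Theta$ be compact, let $P$ be a probability measure on a measurable space $\Omega_T$, and for each $\theta\in\Theta$ let $(h^\theta_n)_{n\ge1}$ be measurable functions $\Omega_T\to\mathbb{R}$. Assume: (i) for every $\theta\in\Theta$, $h^\theta_n$ converges $P$-a.s. to a finite real number $h^\theta$; (ii) $\theta\mapsto h^\theta$ has a unique minimizer $\theta^*$ over $\Theta$, and $\theta^*\in\mathcal{K}$; (iii) for $P$-a.e. $\omega$ and all $n$ large enough, $\theta\mapsto h^\theta_n(\omega)$ attains its infimum over $\mathcal{K}$ at at least one point $\hat\theta_n(\omega)$; (iv) $\theta\mapsto h^\theta$ is lower semicontinuous on $\Theta$; (v) there is $g_0:\mathbb{R}_+\to\mathbb{R}_+$ with $\lim_{x\to0}g_0(x)=0$ such that for every $\varepsilon>0$ and $\theta\in\mathcal{K}$ there are a finite set $\mathcal{N}(\theta)\subset B(\theta,g_0(\varepsilon))\cap\Theta$ and $r(\theta)>0$ with $P\Big(\limsup_{n\to\infty}\big(\min_{\theta'\in\mathcal{N}(\theta)}h^{\theta'}_n-\inf_{\theta'\in B(\theta,r(\theta))\cap\mathcal{K}}h^{\theta'}_n\big)\ge\varepsilon\Big)=0.$ Then $\hat\theta_n=\mathrm{argmin}_{\theta\in\mathcal{K}}h^\theta_n$ converges $P$-almost surely to $\theta^*$ as $n\to\infty$.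
   Context: $B(\theta,r)$ denotes the open Euclidean ball of center $\theta$ and radius $r$ in $\mathbb{R}^p$. *)

From HB Require Import structures.
From mathcomp Require Import all_boot all_order all_algebra.
From mathcomp Require Import all_classical all_reals all_analysis.
Set Implicit Arguments. Unset Strict Implicit. Unset Printing Implicit Defensive.
Import Order.TTheory GRing.Theory Num.Theory.
Import numFieldNormedType.Exports.
Local Open Scope classical_set_scope.
Local Open Scope ring_scope.

Definition enorm (R : realType) (p : nat) (v : 'rV[R]_p) : R :=
  Num.sqrt (\sum_(i < p) (v ord0 i) ^+ 2).

Definition eball (R : realType) (p : nat) (theta : 'rV[R]_p) (r : R) : set 'rV[R]_p :=
  [set x | enorm (x - theta) < r].

(* lower semicontinuity of f on A (for the topology induced on A) *)
Definition lsc_on (R : realType) (p : nat) (A : set 'rV[R]_p) (f : 'rV[R]_p -> R) :=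
  forall x, A x -> forall e : R, 0 < e ->
    \forall y \near x, A y -> f x - e < f y.

(* Fix theta in K with theta <> theta_star. Uniqueness of the minimiser and
   lower semicontinuity give eps > 0 with h^t > h^theta_star + 2 eps for all t
   in Theta near theta, and for this eps the finite set N(theta) of (v) lies in
   that neighbourhood. Almost surely, eventually min_N h_n > h^theta_star + 2 eps
   while h_n(theta_star) < h^theta_star + eps; an argmin of h_n over K inside
   B(theta, r(theta)) would then push min_N h_n - inf_{B r ∩ K} h_n above eps,
   which (v) excludes almost surely. So theta_hat_n eventually avoids a ball
   around each such theta, and covering the compact set K \ B(theta_star, delta)
   by finitely many of these balls gives theta_hat_n in B(theta_star, delta)
   eventually, for every delta > 0. *)
From HB Require Import structures.
From mathcomp Require Import all_boot all_order all_algebra.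
From mathcomp Require Import all_classical all_reals all_analysis.
From mathcomp Require Import lra finmap.
Set Implicit Arguments. Unset Strict Implicit.
Import Order.TTheory GRing.Theory Num.Theory.
Import numFieldNormedType.Exports.
Local Open Scope classical_set_scope.
Local Open Scope ring_scope.

Section euclidean_norm.
Variables (R : realType) (p : nat).
Implicit Types v : 'rV[R]_p.

Lemma entry_le_norm v i : `|v ord0 i| <= `|v|.
Proof.
have /mapP[j Hj ->] : `|v ord0 i| \in [seq `|v x.1 x.2| | x : 'I_1 * 'I_p].
  by apply/mapP; exists (ord0, i) => //=; rewrite mem_enum.
rewrite (_ : `|v| = mx_norm v) // mx_normrE.
by apply/bigmax_geP; right => /=; exists j.
Qed.

Lemma entry_le_enorm v i : `|v ord0 i| <= enorm v.
Proof.
rewrite /enorm -sqrtr_sqr; apply: ler_wsqrtr.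
by rewrite (bigD1 i) //= lerDl sumr_ge0 // => j _; exact: sqr_ge0.
Qed.

Lemma norm_le_enorm v : `|v| <= enorm v.
Proof.
rewrite (_ : `|v| = mx_norm v) // mx_normrE; apply/bigmax_leP; split.
  by rewrite /enorm sqrtr_ge0.
by move=> [a b] _ /=; rewrite (ord1 a); exact: entry_le_enorm.
Qed.

Lemma enorm_le_norm v : enorm v <= p%:R * `|v|.
Proof.
have norm_ge0 : 0 <= p%:R * `|v| by rewrite mulr_ge0.
rewrite /enorm -(ger0_norm norm_ge0) -sqrtr_sqr; apply: ler_wsqrtr.
apply: (@le_trans _ _ (\sum_(i < p) `|v| ^+ 2)).
  apply: ler_sum => i _; rewrite -real_normK ?num_real //.
  by rewrite lerXn2r ?nnegrE // entry_le_norm.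
rewrite sumr_const card_ord exprMn -[X in X <= _]mulr_natl.
apply: ler_wpM2r; first exact: sqr_ge0.
by rewrite -natrX ler_nat; case: (p) => // n; rewrite expnS leq_pmulr.
Qed.

Lemma eball_sub_ball (x : 'rV[R]_p) (r : R) : eball x r `<=` ball x r.
Proof.
move=> y xy; rewrite -ball_normE /= -normrN opprB.
exact: le_lt_trans (norm_le_enorm _) xy.
Qed.

(* The slack [+ 1] keeps the radius positive when p = 0. *)
Lemma ball_sub_eball (x : 'rV[R]_p) (r : R) :
  ball x (r / (p%:R + 1)) `<=` eball x r.
Proof.
move=> y; rewrite -ball_normE /= -normrN opprB => xy.
have xy' : `|y - x| * (p%:R + 1) < r by rewrite -ltr_pdivlMr // ltr_wpDl.
have := enorm_le_norm (y - x); have := normr_ge0 (y - x).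
have : 0 <= (p%:R : R) by []; rewrite /eball /=; nra.
Qed.

End euclidean_norm.

Lemma filter_forall_fset (X : Type) (F : set_system X) (I : choiceType)
    (D : {fset I}) (Q : I -> X -> Prop) : Filter F ->
  (forall i, i \in D -> \forall x \near F, Q i x) ->
  \forall x \near F, forall i, i \in D -> Q i x.
Proof.
move=> FF FQ; apply: filterS (filter_bigI (f := fun i => [set x | Q i x]) FF FQ).
by move=> x Qx i iD; exact: Qx i iD.
Qed.

Lemma limn_esup_lt (R : realType) (u : nat -> \bar R) (e : \bar R) :
  (limn_esup u < e)%E -> \forall n \near \oo, (u n < e)%E.
Proof.
rewrite /limn_esup limf_esupE => /ereal_inf_lt [_ [V FV <-]] Ve.
apply: filterS FV => n Vn; apply: le_lt_trans Ve.
by apply: ereal_sup_ubound; exists n.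
Qed.

Lemma le_ereal_inf_diff (R : realType) (X : Type) (f : X -> R)
    (N B : set X) (x : X) (a : R) :
  B x -> (forall t, N t -> a <= f t) ->
  ((a - f x)%:E <= ereal_inf [set (f t)%:E | t in N]
                   - ereal_inf [set (f t)%:E | t in B])%E.
Proof.
move=> Bx aN; rewrite EFinB; apply: leeB.
  by apply: le_ereal_inf_tmp => _ [t Nt <-]; rewrite lee_fin aN.
by apply: ereal_inf_lbound; exists x.
Qed.

Lemma cvg_right0_small (R : realType) (g : R -> R) (a b : R) :
  g x @[x --> 0^'+] --> 0 -> 0 < a -> 0 < b ->
  exists eps, [/\ 0 < eps, eps < a & g eps < b].
Proof.
move=> g0 a0 b0.
have : \forall x \near 0^'+, [/\ 0 < x, x < a & g x < b].
  near=> x; split.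
  - by near: x; exact: nbhs_right_gt.
  - by near: x; exact: nbhs_right_lt.
  - by near: x; exact: (cvgr_lt _ g0 _ b0).
by move=> /filter_ex.
Unshelve. all: by end_near.
Qed.

Section ae_eventually.
Context d (T : sigmaRingType d) (R : realType) (mu : {measure set T -> \bar R}).

Lemma ae_cvg_near_ball (X : pseudoMetricType R) (x : nat -> T -> X) (l : X) :
  (forall e : R, 0 < e ->
     {ae mu, forall w, \forall n \near \oo, ball l e (x n w)}) ->
  {ae mu, forall w, x n w @[n --> \oo] --> l}.
Proof.
move=> near_l; have : {ae mu, forall w, forall k : nat,
    \forall n \near \oo, ball l k.+1%:R^-1 (x n w)}.
  by apply: ae_foralln => k; apply: near_l; rewrite invr_gt0.
apply: filterS => w near_lw; apply/cvg_ballP => e e0.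
have [k ke] := filter_ex (near_infty_natSinv_lt (PosNum e0)).
by apply: filterS (near_lw k) => n; apply: le_ball; exact: ltW.
Qed.

Lemma ae_eventually_notin_compact (X : ptopologicalType) (x : nat -> T -> X)
    (C : set X) : compact C ->
  (forall t, C t -> exists2 U : set X, open U /\ U t &
     {ae mu, forall w, \forall n \near \oo, ~ U (x n w)}) ->
  {ae mu, forall w, \forall n \near \oo, ~ C (x n w)}.
Proof.
move=> cptC avoid.
have /choice[U HU] : forall t, exists U : set X, C t -> [/\ open U, U t &
    {ae mu, forall w, \forall n \near \oo, ~ U (x n w)}].
  move=> t; have [Ct|nCt] := pselect (C t); last by exists setT => /nCt.
  by have [U [oU Ut] aeU] := avoid t Ct; exists U.
move: cptC; rewrite compact_cover => /(_ _ C U) [].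
- by move=> t /HU[].
- by move=> t Ct; exists t => //; have [] := HU t Ct.
move=> D DC cov.
have : {ae mu, forall w, forall t, t \in D ->
    \forall n \near \oo, ~ U t (x n w)}.
  by apply: filter_forall_fset => t /DC/set_mem/HU[].
apply: filterS => w avoidD.
apply: filterS (filter_forall_fset _ avoidD) => n notU Cxn.
by have [t tD] := cov _ Cxn; exact: notU.
Qed.

End ae_eventually.

Section consistency.
Variables (R : realType) (p : nat) (d : measure_display)
  (T : measurableType d) (P : probability T R)
  (Theta K : set 'rV[R]_p)
  (h : 'rV[R]_p -> nat -> T -> R) (hlim : 'rV[R]_p -> R)
  (theta_star : 'rV[R]_p) (theta_hat : nat -> T -> 'rV[R]_p)
  (g0 : R -> R).
Hypothesis K_sub : K `<=` Theta.
Hypothesis h_cvg : forall theta, Theta theta ->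
  {ae P, forall w, h theta n w @[n --> \oo] --> hlim theta}.
Hypothesis Theta_star : Theta theta_star.
Hypothesis hlim_star_min : forall theta, Theta theta ->
  hlim theta_star <= hlim theta.
Hypothesis hlim_star_uniq : forall theta, Theta theta ->
  (forall theta', Theta theta' -> hlim theta <= hlim theta') ->
  theta = theta_star.
Hypothesis K_star : K theta_star.
Hypothesis theta_hat_argmin : {ae P, forall w, \forall n \near \oo,
  K (theta_hat n w) /\
  (forall theta, K theta -> h (theta_hat n w) n w <= h theta n w)}.
Hypothesis hlim_lsc : lsc_on Theta hlim.
Hypothesis g0_cvg : g0 x @[x --> 0^'+] --> 0.
Hypothesis h_local : forall eps : R, 0 < eps -> forall theta, K theta ->
  exists (N : set 'rV[R]_p) (r : R),
    [/\ finite_set N, N `<=` eball theta (g0 eps) `&` Theta, 0 < r &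
    P.-negligible
      [set w | (eps%:E <=
         limn_esup (fun n =>
           ereal_inf [set (h theta' n w)%:E | theta' in N] -
           ereal_inf [set (h theta' n w)%:E | theta' in eball theta r `&` K]))%E]].

Lemma hlim_star_lt theta : Theta theta -> theta <> theta_star ->
  hlim theta_star < hlim theta.
Proof.
move=> Tt neq; rewrite lt_neqAle hlim_star_min // andbT; apply/eqP => E.
by apply: neq; apply: hlim_star_uniq => // t' Tt'; rewrite -E hlim_star_min.
Qed.

Lemma exists_separating_eps theta : K theta -> theta <> theta_star ->
  exists2 eps : R, 0 < eps & forall t, Theta t -> eball theta (g0 eps) t ->
    hlim theta_star + 2 * eps < hlim t.
Proof.
move=> Kt neq; have Tt := K_sub Kt.
pose gap := hlim theta - hlim theta_star.
have gap0 : 0 < gap by rewrite subr_gt0 hlim_star_lt.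
have [rho rho0 lsc_rho] : nbhs_ball theta
    [set t | Theta t -> hlim theta - gap / 2 < hlim t].
  by apply/nbhs_ballP; apply: hlim_lsc => //; rewrite divr_gt0.
have gap4 : 0 < gap / 4 by rewrite divr_gt0.
have [eps [eps0 eps_gap g0_eps]] := cvg_right0_small g0_cvg gap4 rho0.
exists eps => // t Tt' /eball_sub_ball/(le_ball (ltW g0_eps))/lsc_rho/(_ Tt').
rewrite /gap in eps_gap *; lra.
Qed.

Lemma ae_eventually_notin_ball theta : K theta -> theta <> theta_star ->
  exists2 rho : R, 0 < rho &
    {ae P, forall w, \forall n \near \oo, ~ ball theta rho (theta_hat n w)}.
Proof.
move=> Kt neq; have [eps eps0 sep] := exists_separating_eps Kt neq.
have [N [r [finN N_sub r0 negl]]] := h_local eps0 Kt.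
have [N' EN] := finite_fsetP.1 finN; subst N.
exists (r / (p%:R + 1)); first by rewrite divr_gt0 // ltr_wpDl.
pose u w n := (ereal_inf [set (h t n w)%:E | t in [set` N']]
  - ereal_inf [set (h t n w)%:E | t in eball theta r `&` K])%E.
have N_cvg : {ae P, forall w, forall t, t \in N' ->
    h t n w @[n --> \oo] --> hlim t}.
  by apply: filter_forall_fset => t /N_sub[_]; exact: h_cvg.
have u_small : {ae P, forall w, (limn_esup (u w) < eps%:E)%E}.
  by apply: negligibleS negl => w /= /negP; rewrite -leNgt.
apply: filterS (filterI N_cvg (filterI u_small
  (filterI (h_cvg Theta_star) theta_hat_argmin))).
move=> w [N_cvgw [/limn_esup_lt u_smallw [star_cvgw argminw]]].
have N_big : \forall n \near \oo, forall t, t \in N' ->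
    hlim theta_star + 2 * eps < h t n w.
  apply: filter_forall_fset => t tN; apply: (cvgr_gt _ (N_cvgw t tN)).
  by have [Nt Tt] := N_sub t tN; exact: sep.
have star_small : \forall n \near \oo, h theta_star n w < hlim theta_star + eps.
  by apply: (cvgr_lt _ star_cvgw); rewrite ltrDl.
near=> n => /ball_sub_eball B_hat.
have [K_hat hat_min] : K (theta_hat n w) /\
  (forall t, K t -> h (theta_hat n w) n w <= h t n w) by near: n.
have N_bign : forall t, t \in N' -> hlim theta_star + 2 * eps < h t n w.
  by near: n.
have u_n : (u w n < eps%:E)%E by near: n.
have := le_lt_trans (le_ereal_inf_diff (N := [set` N']) (conj B_hat K_hat)
  (fun t tN => ltW (N_bign t tN))) u_n.
rewrite lte_fin; have := hat_min _ K_star.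
have : h theta_star n w < hlim theta_star + eps by near: n.
lra.
Unshelve. all: by end_near.
Qed.

End consistency.

Theorem lemma4 (R : realType) (p : nat) (d : measure_display)
  (T : measurableType d) (P : probability T R)
  (Theta K : set 'rV[R]_p)
  (h : 'rV[R]_p -> nat -> T -> R) (hlim : 'rV[R]_p -> R)
  (theta_star : 'rV[R]_p) (theta_hat : nat -> T -> 'rV[R]_p)
  (g0 : R -> R) :
  K `<=` Theta -> compact K ->
  (forall theta, Theta theta -> forall n, measurable_fun setT (h theta n)) ->
  (* (i) *)
  (forall theta, Theta theta ->
     {ae P, forall w, h theta n w @[n --> \oo] --> hlim theta}) ->
  (* (ii) *)
  Theta theta_star ->
  (forall theta, Theta theta -> hlim theta_star <= hlim theta) ->
  (forall theta, Theta theta ->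
     (forall theta', Theta theta' -> hlim theta <= hlim theta') ->
     theta = theta_star) ->
  K theta_star ->
  (* (iii) *)
  {ae P, forall w, \forall n \near \oo,
     K (theta_hat n w) /\
     (forall theta, K theta -> h (theta_hat n w) n w <= h theta n w)} ->
  (* (iv) *)
  lsc_on Theta hlim ->
  (* (v) *)
  (forall x, 0 <= x -> 0 <= g0 x) ->
  g0 x @[x --> 0^'+] --> 0 ->
  (forall eps : R, 0 < eps -> forall theta, K theta ->
     exists (N : set 'rV[R]_p) (r : R),
       [/\ finite_set N, N `<=` eball theta (g0 eps) `&` Theta, 0 < r &
       P.-negligible
         [set w | (eps%:E <=
            limn_esup (fun n =>
              ereal_inf [set (h theta' n w)%:E | theta' in N] -
              ereal_inf [set (h theta' n w)%:E | theta' in eball theta r `&` K]))%E]]) ->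
  {ae P, forall w, theta_hat n w @[n --> \oo] --> theta_star}.
Proof.
move=> K_sub cptK _ h_cvg Theta_star star_min star_uniq K_star argmin lsc _
  g0_cvg h_local.
apply: ae_cvg_near_ball => e e0.
pose C := K `&` ~` ball theta_star e.
have cptC : compact C.
  by apply: compact_closedI cptK (open_closedC (ball_open _ _)).
have notC : {ae P, forall w, \forall n \near \oo, ~ C (theta_hat n w)}.
  apply: ae_eventually_notin_compact cptC _ => t [Kt not_star].
  have neq : t <> theta_star.
    by move=> E; apply: not_star; rewrite E; exact: ballxx.
  have [rho rho0 avoid] := ae_eventually_notin_ball K_sub h_cvg Theta_star
    star_min star_uniq K_star argmin lsc g0_cvg h_local Kt neq.
  by exists (ball t rho) => //; split; [exact: ball_open | exact: ballxx].
apply: filterS (filterI notC argmin) => w [notCw argminw].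
apply: filterS (filterI notCw argminw) => n [notCn [Kn _]].
by apply: contrapT => ?; apply: notCn.
Qed.
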